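(* Let $w=a_1\cdots a_n$ be a word over $\{a,b\}$ with $a_1\neq a_n$. If deleting some $k$ letters from $w$ yields an antipalindrome, then one can obtain an antipalindrome by deleting some $l\le k$ letters from $w$ in such a way that the letters $a_1$ and $a_n$ are not deleted.
   Context: A word is a finite word over the two-letter alphabet $\{a,b\}$. A word $w=a_1\cdots a_n$ is an antipalindrome if $a_i\neq a_{n-i+1}$ for all $i\le n$. *)

From mathcomp Require Import all_boot.
Set Implicit Arguments. Unset Strict Implicit. Unset Printing Implicit Defensive.

(* Words over {a,b} are encoded as seq bool (a = true, b = false). *)
Definition word := seq bool.

Definition antipalindrome (w : word) : Prop :=
  forall i, i < size w -> nth false w i != nth false w (size w - 1 - i).

(* Deleting letters from w: a mask m of the same length as w; position i is
   kept iff m_i = true.  The resulting word is mask m w, and the number of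
   deleted letters is the number of false entries of m. *)
Definition ndeleted (m : bitseq) : nat := count negb m.

From mathcomp Require Import all_boot zify.

(* Write w = x w' y with x <> y, and let u be an antipalindrome obtained from w
   by deletions.  If both x and y are deleted, then x u y is again an
   antipalindrome, with two fewer deletions.  If only y survives, then u = z u' y
   where z is a letter of w' and u' is an antipalindrome; deleting z and keeping
   x yields x u' y, an antipalindrome with as many deletions as u.  The case where
   only x survives is the mirror image. *)

Lemma antipalindromeE (s : word) : antipalindrome s <-> s = map negb (rev s).
Proof.
have sub_pred i : i < size s -> size s - 1 - i = size s - i.+1 by lia.
split=> [anti_s | ].
- apply: (@eq_from_nth _ false); first by rewrite size_map size_rev.
  move=> i lt_i; rewrite (nth_map false) ?size_rev // nth_rev //.
  by move: (anti_s i lt_i); rewrite sub_pred //; case: (nth _ _ _); case: (nth _ _ _).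
- move=> E i lt_i; rewrite {1}E (nth_map false) ?size_rev // nth_rev // sub_pred //.
  by case: (nth _ _ _).
Qed.

Lemma antipalindrome_cons_rcons (x y : bool) (s : word) :
  antipalindrome (x :: rcons s y) <-> x != y /\ antipalindrome s.
Proof.
rewrite antipalindromeE rev_cons rev_rcons /= map_rcons.
split=> [[-> /rcons_inj [anti_s _]] | [xy /antipalindromeE anti_s]].
- by split; [case: y | apply/antipalindromeE].
- by rewrite -anti_s; congr (_ :: rcons _ _); case: x y xy => [] [].
Qed.

Lemma antipalindrome_singleton (x : bool) : ~ antipalindrome [:: x].
Proof. by move/(_ 0 isT); rewrite eqxx. Qed.

Lemma count_negb_cons_rcons (b1 b2 : bool) (m : bitseq) :
  count negb (b1 :: rcons m b2) = ~~ b1 + count negb m + ~~ b2.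
Proof. by rewrite /= -cats1 count_cat /= addn0 addnA. Qed.

Lemma mask_behead {T : Type} {m : bitseq} {s : seq T} {z : T} {v : seq T} :
  size m = size s -> mask m s = z :: v ->
  exists m', [/\ size m' = size s, count negb m' = (count negb m).+1
                 & mask m' s = v].
Proof.
elim: m s => [|b m IH] [|c s] //= [size_ms].
case: b => /= [[_ <-] | /(IH _ size_ms) [m' [size_m' count_m' mask_m']]].
- by exists (false :: m); rewrite /= size_ms.
- by exists (false :: m'); rewrite /= size_m' count_m'.
Qed.

Lemma mask_belast {T : Type} {m : bitseq} {s : seq T} {z : T} {v : seq T} :
  size m = size s -> mask m s = rcons v z ->
  exists m', [/\ size m' = size s, count negb m' = (count negb m).+1
                 & mask m' s = v].
Proof.
move=> size_ms mask_ms.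
have size_rev_ms : size (rev m) = size (rev s) by rewrite !size_rev.
have mask_rev_ms : mask (rev m) (rev s) = z :: rev v.
  by rewrite -rev_mask // mask_ms rev_rcons.
have [m' [size_m' count_m' mask_m']] := mask_behead size_rev_ms mask_rev_ms.
exists (rev m').
split; first by rewrite size_rev size_m' size_rev.
- by rewrite count_rev count_m' count_rev.
- by rewrite -[s]revK -rev_mask ?mask_m' ?revK // size_rev size_m'.
Qed.

Lemma antipalindrome_keep_ends {x y : bool} {w' : word} {b1 b2 : bool} {m : bitseq} :
  x != y -> size m = size w' ->
  antipalindrome (mask (b1 :: rcons m b2) (x :: rcons w' y)) ->
  exists m', [/\ size m' = size w',
                 count negb m' <= count negb (b1 :: rcons m b2)
               & antipalindrome (x :: rcons (mask m' w') y)].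
Proof.
move=> xy size_m; rewrite mask_cons mask_rcons //.
rewrite count_negb_cons_rcons.
set u := mask m w'.
case: b1 b2 => [] [] /= anti_u.
- by exists m; rewrite cats1 in anti_u; split=> //; lia.
- move: anti_u; rewrite cats0; case/lastP E: u => [|v z].
    by move=> /antipalindrome_singleton.
  move=> /antipalindrome_cons_rcons [_ anti_v].
  have [m' [size_m' count_m' mask_m']] := mask_belast size_m E.
  rewrite -mask_m' in anti_v.
  exists m'; split=> //; first by lia.
  by apply/antipalindrome_cons_rcons.
- move: anti_u; rewrite cats1; case E: u => [|z v].
    by move=> /antipalindrome_singleton.
  rewrite rcons_cons => /antipalindrome_cons_rcons [_ anti_v].
  have [m' [size_m' count_m' mask_m']] := mask_behead size_m E.
  rewrite -mask_m' in anti_v.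
  exists m'; split=> //; first by lia.
  by apply/antipalindrome_cons_rcons.
- exists m; split=> //; first by lia.
  by rewrite cats0 in anti_u; apply/antipalindrome_cons_rcons.
Qed.

Theorem lemma3 (w : word) (k : nat) :
  0 < size w ->
  nth false w 0 != nth false w (size w - 1) ->
  (exists m : bitseq, size m = size w /\ ndeleted m = k /\
     antipalindrome (mask m w)) ->
  exists m : bitseq, [/\ size m = size w, ndeleted m <= k,
     antipalindrome (mask m w),
     nth false m 0 & nth false m (size w - 1)].
Proof.
case: w => // x w _; case/lastP: w => [|w' y]; first by rewrite eqxx.
rewrite /= size_rcons subn1 /= nth_rcons ltnn eqxx => xy [m [size_m [<- anti_m]]].
case: m size_m anti_m => [|b1 m] //; case/lastP: m => [|m b2]; first by case.
move=> -[]; rewrite size_rcons => -[size_m] anti_m.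
have [m' [size_m' count_m' anti_m']] := antipalindrome_keep_ends xy size_m anti_m.
exists (true :: rcons m' true); split.
- by rewrite /= size_rcons size_m'.
- rewrite /ndeleted count_negb_cons_rcons addn0 add0n; exact: count_m'.
- by rewrite mask_cons mask_rcons // /= cats1.
- by [].
- by rewrite /= nth_rcons size_m' ltnn eqxx.
Qed.
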